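(* Let $(G,L,v)$ be a reachable triple, $i\in[4]$ a color, and $D$ a nonnegative integer. Then $0\le P(G,L,v,i,D)\le \tfrac12$.
   Context: Colors are $[4]=\{1,2,3,4\}$. A list-coloring instance $(G,L)$ is a finite simple graph $G=(V,E)$ with $L:V\to 2^{[4]}$. For a vertex $v$, $G_v$ is $G$ with $v$ and its incident edges removed, and $G_{v,w}=(G_v)_w$. If $v$ has neighbors $v_1,\dots,v_d$ (in a fixed order), then for $k\in[d]$ and a color $j$, $L_{k,j}$ is the list assignment on $G_v$ with $L_{k,j}(v_\ell)=L(v_\ell)\setminus\{j\}$ for $\ell<k$ and $L_{k,j}(u)=L(u)$ for all other vertices $u$ (so $L_{1,j}=L$). A triple $(G,L,v)$ with $v\in V$ is reachable if $\deg_G(u)\le3$ and $|L(u)|\ge\deg_G(u)+1$ for every $u\in V$, and moreover $\deg_G(v)\le2$ and $|L(v)|\ge\deg_G(v)+2$. The procedure $P(G,L,v,i,D)$ ($i\in[4]$, $D$ an integer) is defined recursively (empty products equal $1$): (a) If $i\notin L(v)$, return $0$. Otherwise, if $D\le 0$ or $\deg_G(v)=0$, return $1/|L(v)|$. (b) If $\deg_G(v)=1$ with neighbor $v_1$: let $x=P(G_v,L,v_1,i,D-1)$. If $|L(v)|=2$, say $L(v)=\{i,j\}$, let $y=P(G_v,L,v_1,j,D-1)$ and return $\frac{1-x}{2-x-y}$. If $|L(v)|=4$, return $\frac{1-x}{3}$. If $|L(v)|=3$, let $j$ be the unique color in $[4]\setminus L(v)$, $y=P(G_v,L,v_1,j,D-1)$,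 and return $\frac{1-x}{2+y}$. (c) If $\deg_G(v)=2$: order its neighbors $v_1,v_2$ so that $\deg_G(v_1)\ge\deg_G(v_2)$ and, if $\deg_G(v_1)=\deg_G(v_2)=1$, so that $i\notin L(v_1)$ implies $i\notin L(v_2)$. Let $u_1,\dots,u_{d_1}$ be the neighbors of $v_1$ in $G_v$ (fixed order) and for $k\in[d_1]$, $w\in[4]$ let $L'_{k,w}$ be the list assignment on $G_{v,v_1}$ with $L'_{k,w}(u_\ell)=L(u_\ell)\setminus\{w\}$ for $\ell<k$ and $L'_{k,w}(u)=L(u)$ otherwise. Set $x_{k,w}=P(G_{v,v_1},L'_{k,w},u_k,w,D-1)$ for $k\in[d_1]$, $w\in L(v_1)$. For $j\in L(v)$ set $f_j=0$ if $j\notin L(v_1)$ and otherwise $f_j=\frac{\prod_{k=1}^{d_1}(1-x_{k,j})}{\sum_{w\in L(v_1)}\prod_{k=1}^{d_1}(1-x_{k,w})}$, and set $y_j=P(G_v,L_{2,j},v_2,j,D-1)$. Return $\frac{(1-f_i)(1-y_i)}{\sum_{j\in L(v)}(1-f_j)(1-y_j)}$. (d) If $\deg_G(v)=3$ with neighbors $v_1,v_2,v_3$: for $j\in L(v)$ let $x_j=P(G_v,L_{1,j},v_1,j,D-1)$, $y_j=P(G_v,L_{2,j},v_2,j,D-1)$, $z_j=P(G_v,L_{3,j},v_3,j,D-1)$, and return $\frac{(1-x_i)(1-y_i)(1-z_i)}{\sum_{j\in L(v)}(1-x_j)(1-y_j)(1-z_j)}$. For reachable triples, all recursive calls are again on reachable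 triples and case (d) never occurs. *)

From mathcomp Require Import all_boot all_order all_algebra.
Import Order.TTheory GRing.Theory Num.Theory.
Set Implicit Arguments. Unset Strict Implicit. Unset Printing Implicit Defensive.
Local Open Scope ring_scope.

(* Colors: 'I_4, where (c : 'I_4) stands for the color c+1 of [4] = {1,2,3,4}. *)

Record graph := Graph { gV : seq nat ; gE : rel nat }.

Definition simple_graph (G : graph) : Prop :=
  [/\ uniq (gV G), (forall a b, gE G a b = gE G b a) & (forall a, ~~ gE G a a)].

Definition nbrs (G : graph) (v : nat) : seq nat := [seq u <- gV G | gE G v u].
Definition deg (G : graph) (v : nat) : nat := size (nbrs G v).

Definition delv (G : graph) (v : nat) : graph :=
  Graph [seq u <- gV G | u != v] (gE G).

Definition lists := nat -> {set 'I_4}.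

Definition Lrm (L : lists) (S : seq nat) (j : 'I_4) : lists :=
  fun u => if u \in S then L u :\ j else L u.

Definition reachable (G : graph) (L : lists) (v : nat) : Prop :=
  [/\ simple_graph G, v \in gV G,
      (forall u, u \in gV G -> (deg G u <= 3)%N /\ (deg G u < #|L u|)%N)
    & (deg G v <= 2)%N /\ (deg G v + 2 <= #|L v|)%N].

(* The procedure P(G,L,v,i,D).  [ord G v] is the fixed order in which the
   neighbours of v in G are listed (a permutation of [nbrs G v]; this is a
   hypothesis of the theorem).  Values on inputs not covered by the paper's
   description (unreachable ones) are junk (0). *)
Fixpoint P (R : realFieldType) (ord : graph -> nat -> seq nat) (D : nat)
    (G : graph) (L : lists) (v : nat) (i : 'I_4) {struct D} : R :=
  if i \notin L v then 0 else
  match D with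
  | 0%N => 1 / (#|L v|%:R)
  | D'.+1 =>
    let G1 := delv G v in
    match ord G v with
    | [::] => 1 / (#|L v|%:R)
    | [:: v1] =>
        let x := P R ord D' G1 L v1 i in
        if #|L v| == 2%N then
          let j := odflt i [pick j in L v :\ i] in
          let y := P R ord D' G1 L v1 j in
          (1 - x) / (2 - x - y)
        else if #|L v| == 4%N then (1 - x) / 3
        else if #|L v| == 3%N then
          let j := odflt i [pick j in ~: L v] in
          let y := P R ord D' G1 L v1 j in
          (1 - x) / (2 + y)
        else 0
    | [:: a; b] =>
        let vv := if (deg G b < deg G a)%N then (a, b)
                  else if (deg G a < deg G b)%N then (b, a)
                  else if [&& deg G a == 1%N, i \notin L a & i \in L b]
                       then (b, a) else (a, b) in
        let v1 := vv.1 in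
        let v2 := vv.2 in
        let G2 := delv G1 v1 in
        let us := ord G1 v1 in
        let x (k : nat) (w : 'I_4) :=
            P R ord D' G2 (Lrm L (take k us) w) (nth 0%N us k) w in
        let pr (w : 'I_4) := \prod_(k < size us) (1 - x k w) in
        let f (j : 'I_4) :=
            if j \in L v1 then pr j / \sum_(w in L v1) pr w else 0 in
        let y (j : 'I_4) := P R ord D' G1 (Lrm L [:: v1] j) v2 j in
        (1 - f i) * (1 - y i) / \sum_(j in L v) (1 - f j) * (1 - y j)
    | [:: v1; v2; v3] =>
        let x (j : 'I_4) := P R ord D' G1 L v1 j in
        let y (j : 'I_4) := P R ord D' G1 (Lrm L [:: v1] j) v2 j in
        let z (j : 'I_4) := P R ord D' G1 (Lrm L [:: v1; v2] j) v3 j in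
        (1 - x i) * (1 - y i) * (1 - z i)
          / \sum_(j in L v) (1 - x j) * (1 - y j) * (1 - z j)
    | _ => 0
    end
  end.

(* Deleting v lowers the degree of each neighbour by one,
   which pays for removing one colour from its list, so every recursive call
   is again reachable and the induction hypothesis bounds all values by 1/2.
   For deg v <= 1 the recursion formulas then give the bound directly.  For
   deg v = 2 the list of v is all of [4]; the weights f_j sum to 1, and
   since y_j <= 1/2 each term (1 - f_j)(1 - y_j) is at least (1 - f_j)/2, so
   the three terms with j <> i sum to at least 1 and the i-th term is at
   most half of the total. *)

From mathcomp Require Import all_boot all_order all_algebra.
From mathcomp Require Import zify lra.
Import Order.TTheory GRing.Theory Num.Theory.
Local Open Scope ring_scope.

Lemma nbrs_delv G v w : nbrs (delv G v) w = [seq u <- nbrs G w | u != v].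
Proof. by rewrite /nbrs /= -!filter_predI; apply: eq_filter => u /=; rewrite andbC. Qed.

Lemma deg_delv_le G v w : (deg (delv G v) w <= deg G w)%N.
Proof. by rewrite /deg nbrs_delv size_filter count_size. Qed.

Lemma deg_delv_lt G v w : v \in nbrs G w -> (deg (delv G v) w < deg G w)%N.
Proof.
move=> vw; rewrite /deg nbrs_delv size_filter -(count_predC (predC1 v) (nbrs G w)).
rewrite -[X in (X < _)%N]addn0 ltn_add2l -has_count.
by apply/hasP; exists v => //=; rewrite negbK.
Qed.

Lemma nbrs_sym G v w : simple_graph G -> v \in gV G -> w \in nbrs G v -> v \in nbrs G w.
Proof. by case=> _ sym _ vV; rewrite !mem_filter sym vV => /andP[-> _]. Qed.

Lemma reachable_delv G L v u (L' : lists) (S : seq nat) :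
  reachable G L v -> u \in nbrs G v -> u \notin S -> {subset S <= nbrs G v} ->
  (forall w, w \notin S -> L' w = L w) ->
  (forall w, w \in S -> (#|L w| <= #|L' w|.+1)%N) ->
  reachable (delv G v) L' u.
Proof.
move=> [sG vV degL _] uN uS SN L'E L'S; have [uniqV sym irr] := sG.
have uV : u \in gV G by move: uN; rewrite mem_filter => /andP[].
have deg_lt w : w \in nbrs G v -> (deg (delv G v) w < deg G w)%N.
  by move=> wN; apply/deg_delv_lt/nbrs_sym.
split.
- by split=> //=; exact: filter_uniq.
- rewrite /= mem_filter uV andbT; apply: contraTneq uN => ->.
  by rewrite mem_filter (negbTE (irr v)).
- move=> w; rewrite mem_filter => /andP[_ wV]; have [w3 wL] := degL w wV.
  split; first exact: leq_trans (deg_delv_le _ _ _) w3.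
  have [wS|wS] := boolP (w \in S).
    by have := deg_lt w (SN w wS); have := L'S w wS; lia.
  by rewrite L'E //; exact: leq_ltn_trans (deg_delv_le _ _ _) wL.
- by have := deg_lt u uN; have := degL u uV; rewrite L'E //; lia.
Qed.

Lemma reachable_delv_nbr G L v u :
  reachable G L v -> u \in nbrs G v -> reachable (delv G v) L u.
Proof. by move=> GLv uN; apply: (@reachable_delv G L v u L [::]). Qed.

Lemma card_Lrm (L : lists) S j w : (#|L w| <= #|Lrm L S j w|.+1)%N.
Proof. by rewrite /Lrm; case: ifP => // _; rewrite (cardsD1 j (L w)); case: (j \in L w). Qed.

Lemma reachable_delv_Lrm G L v u S j :
  reachable G L v -> u \in nbrs G v -> u \notin S -> {subset S <= nbrs G v} ->
  reachable (delv G v) (Lrm L S j) u.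
Proof.
move=> GLv uN uS SN; apply: (reachable_delv G L v u _ S) => // w wS.
  by rewrite /Lrm (negbTE wS).
by rewrite card_Lrm.
Qed.

Lemma nth_notin_take (T : eqType) (x0 : T) (s : seq T) k :
  uniq s -> (k < size s)%N -> nth x0 s k \notin take k s.
Proof.
move=> us ks; rewrite -[s in uniq s](cat_take_drop k) in us.
by rewrite (drop_nth x0 ks) cat_uniq /= negb_or in us; case/and4P: us => _ /andP[].
Qed.

Lemma reachable_delv_prefix H L p (s : seq nat) k w :
  reachable H L p -> perm_eq s (nbrs H p) -> (k < size s)%N ->
  reachable (delv H p) (Lrm L (take k s) w) (nth 0%N s k).
Proof.
move=> HLp sN ks; have [[uniqV _ _] _ _ _] := HLp.
apply: reachable_delv_Lrm => //.
- by rewrite -(perm_mem sN) mem_nth.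
- by apply: nth_notin_take => //; rewrite (perm_uniq sN) filter_uniq.
- by move=> u /mem_take; rewrite (perm_mem sN).
Qed.

Definition in_half {R : realFieldType} (x : R) : Prop := 0 <= x /\ x <= 1 / 2.

Section HalfBounds.
Context {R : realFieldType}.
Implicit Types x y : R.

Lemma in_half0 : in_half (0 : R).
Proof. by split; lra. Qed.

Lemma in_half_inv_nat n : (2 <= n)%N -> in_half (1 / (n%:R : R)).
Proof.
rewrite -(ler_nat R) => n2; split; first by apply: divr_ge0; lra.
by rewrite ler_pdivrMr; lra.
Qed.

Lemma in_half_div3 x : in_half x -> in_half ((1 - x) / 3).
Proof. by rewrite /in_half; lra. Qed.

Lemma in_half_div2D x y : in_half x -> in_half y -> in_half ((1 - x) / (2 + y)).
Proof.
move=> [x0 x1] [y0 y1]; split; first by apply: divr_ge0; lra.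
by rewrite ler_pdivrMr; lra.
Qed.

Definition normalize {T : finType} (A : {set T}) (pr : T -> R) (j : T) : R :=
  if j \in A then pr j / \sum_(w in A) pr w else 0.

Lemma normalize_ge0 (T : finType) (A : {set T}) pr j :
  {in A, forall w, 0 < pr w} -> 0 <= normalize A pr j.
Proof.
move=> pr_gt0; rewrite /normalize; case: ifP => // jA.
by apply: divr_ge0; [exact/ltW/pr_gt0 | apply: sumr_ge0 => w /pr_gt0/ltW].
Qed.

Lemma sum_normalize (T : finType) (A : {set T}) pr :
  A != set0 -> {in A, forall w, 0 < pr w} -> \sum_j normalize A pr j = 1.
Proof.
case/set0Pn=> w0 w0A pr_gt0.
rewrite /normalize -big_mkcond /= -mulr_suml divff // gt_eqF //.
by rewrite (bigD1 w0) //= ltr_wpDr ?pr_gt0 // sumr_ge0 // => w /andP[/pr_gt0/ltW].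
Qed.

Lemma in_half_ratio (T : finType) (f y : T -> R) (i : T) :
  (4 <= #|T|)%N -> (forall j, 0 <= f j) -> \sum_j f j = 1 ->
  (forall j, in_half (y j)) ->
  in_half ((1 - f i) * (1 - y i) / \sum_j (1 - f j) * (1 - y j)).
Proof.
rewrite -(ler_nat R) => T4 f_ge0 f_sum y_half.
have f_le1 j : f j <= 1.
  by rewrite -f_sum (bigD1 j) //= lerDl sumr_ge0.
have sum_1Bf : \sum_j (1 - f j) = #|T|%:R - 1 by rewrite sumrB f_sum sumr_const.
have [y0 y1] := y_half i; have fi0 := f_ge0 i; have fi1 := f_le1 i.
(* As [y j <= 1/2], the terms with [j != i] add up to at least
   [(#|T| - 2 + f i) / 2 >= 1], which bounds the [i]-th term. *)
have rest : \sum_(j | j != i) (1 - f j) / 2 <= \sum_(j | j != i) (1 - f j) * (1 - y j).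
  by apply: ler_sum => j _; have := y_half j; have := f_le1 j; rewrite /in_half; nra.
rewrite -mulr_suml in rest; move: sum_1Bf; rewrite (bigD1 i) //= => sum_1Bf.
rewrite (bigD1 i) //=; split; first by apply: divr_ge0; nra.
by rewrite ler_pdivrMr; nra.
Qed.
End HalfBounds.

Section InductionStep.
Variables (R : realFieldType) (ord : graph -> nat -> seq nat).
Hypothesis ord_nbrs : forall H u, perm_eq (ord H u) (nbrs H u).
Variable D : nat.
Hypothesis IH : forall G L v i, reachable G L v -> in_half (P R ord D G L v i).

Lemma in_half_P_deg1 G L v v1 i :
  reachable G L v -> ord G v = [:: v1] -> in_half (P R ord D.+1 G L v i).
Proof.
move=> GLv ordv; have [_ _ _ [_ Lv]] := GLv.
have v1N : v1 \in nbrs G v by rewrite -(perm_mem (ord_nbrs G v)) ordv mem_head.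
have Hv1 := reachable_delv_nbr G L v v1 GLv v1N.
have Lv34 : #|L v| = 3%N \/ #|L v| = 4%N.
  have := max_card (L v); rewrite card_ord.
  by move: Lv; rewrite /deg -(perm_size (ord_nbrs G v)) ordv /=; lia.
rewrite /= ordv; case: ifP => _; first exact: in_half0.
by case: Lv34 => -> /=; [apply: in_half_div2D | apply: in_half_div3]; exact: IH.
Qed.

Lemma in_half_P_deg2 G L v v1 v2 i :
  reachable G L v -> ord G v = [:: v1; v2] -> in_half (P R ord D.+1 G L v i).
Proof.
move=> GLv ordv; have [[uniqV _ _] _ _ [_ Lv]] := GLv.
have v12N : {subset [:: v1; v2] <= nbrs G v}.
  by move=> u; rewrite -(perm_mem (ord_nbrs G v)) ordv.
have v12 : v1 != v2.
  by have := perm_uniq (ord_nbrs G v); rewrite ordv filter_uniq //= inE andbT.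
have LvT : L v = setT.
  apply/eqP; rewrite eqEcard subsetT cardsT card_ord.
  by move: Lv; rewrite /deg -(perm_size (ord_nbrs G v)) ordv.
rewrite /= ordv; case: ifP => _; first exact: in_half0.
set vv := (if (deg G v2 < deg G v1)%N then _ else _).
have [pN qN pq] : [/\ vv.1 \in nbrs G v, vv.2 \in nbrs G v & vv.1 != vv.2].
  have [->|->] : vv = (v1, v2) \/ vv = (v2, v1) by rewrite /vv; repeat case: ifP; auto.
    by rewrite /= !v12N ?inE ?eqxx ?orbT.
  by rewrite /= !v12N ?inE ?eqxx ?orbT // eq_sym.
case: vv pN qN pq => p q /= pN qN pq.
pose us := ord (delv G v) p.
have x_half k w : (k < size us)%N ->
    in_half (P R ord D (delv (delv G v) p) (Lrm L (take k us) w) (nth 0%N us k) w).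
  by move=> ks; apply/IH/reachable_delv_prefix; rewrite ?ord_nbrs //; exact: reachable_delv_nbr.
have y_half j : in_half (P R ord D (delv G v) (Lrm L [:: p] j) q j).
  apply/IH/reachable_delv_Lrm; rewrite ?inE 1?eq_sym //.
  by move=> u; rewrite inE => /eqP ->.
pose pr w := \prod_(k < size us)
  (1 - P R ord D (delv (delv G v) p) (Lrm L (take k us) w) (nth 0%N us k) w).
have pr_gt0 : {in L p, forall w, 0 < pr w}.
  by move=> w _; apply: prodr_gt0 => k _; have [_] := x_half k w (ltn_ord k); lra.
have Lp0 : L p != set0.
  have [_ pV degL _] := reachable_delv_nbr G L v p GLv pN.
  by rewrite -card_gt0; exact: leq_ltn_trans (degL p pV).2.
rewrite [X in _ / X](eq_bigl xpredT) => [|j]; last by rewrite LvT in_setT.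
apply: (in_half_ratio _ (normalize (L p) pr)
  (fun j => P R ord D (delv G v) (Lrm L [:: p] j) q j)) => //.
- by rewrite card_ord.
- by move=> j; apply: normalize_ge0.
- exact: sum_normalize.
Qed.
End InductionStep.

Lemma in_half_P (R : realFieldType) (ord : graph -> nat -> seq nat)
    (ord_nbrs : forall H u, perm_eq (ord H u) (nbrs H u)) D G L v i :
  reachable G L v -> in_half (P R ord D G L v i).
Proof.
elim: D G L v i => [|D IH] G L v i GLv; have [_ _ _ [degv Lv]] := GLv.
  rewrite /=; case: ifP => _; first exact: in_half0.
  by apply: in_half_inv_nat; exact: leq_trans (leq_addl _ _) Lv.
move: degv Lv; rewrite /deg -(perm_size (ord_nbrs G v)).
case ordv: (ord G v) => [|v1 [|v2 [|v3 t]]] //= _ Lv.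
- rewrite /= ordv; case: ifP => _; first exact: in_half0.
  exact: in_half_inv_nat.
- exact: in_half_P_deg1 ordv.
- exact: in_half_P_deg2 ordv.
Qed.

Theorem proposition7 (R : realFieldType) (ord : graph -> nat -> seq nat)
    (Hord : forall (H : graph) (u : nat), perm_eq (ord H u) (nbrs H u))
    (G : graph) (L : lists) (v : nat) (i : 'I_4) (D : nat) :
  reachable G L v ->
  0 <= P R ord D G L v i /\ P R ord D G L v i <= 1 / 2.
Proof. exact: in_half_P. Qed.
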